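(* Let $n,d\ge 1$, $r\in[0,1]$, $\omega\ge 0$, $\alpha\in(0,1]$, $K_\omega,K_\alpha>0$, and $0<\mu\le L\le L_{\max}\le nL$, with $L_{\max}$ known. Put $\mu^r_{\omega,\alpha}=\frac{rd}{(1-r)K_\omega+rK_\alpha}$ and $K^r=(1-r)K_\omega+rK_\alpha$. For $p,\tau\in(0,1]$ let $$T(p,\tau)=\max\Big\{\sqrt{\tfrac{L}{\alpha p\mu}},\sqrt{\tfrac{L}{\alpha\tau\mu}},\sqrt{\tfrac{\sqrt{LL_{\max}}(\omega+1)\sqrt{\omega\tau}}{\alpha\sqrt n\,\mu}},\sqrt{\tfrac{\sqrt{LL_{\max}}\sqrt{\omega+1}\sqrt{\omega\tau}}{\alpha\sqrt p\sqrt n\,\mu}},\sqrt{\tfrac{L_{\max}\omega(\omega+1)^2p}{n\mu}},\sqrt{\tfrac{L_{\max}\omega}{np\mu}},\tfrac1\alpha,\tfrac1\tau,\omega+1,\tfrac1p\Big\}$$ and $M(p,\tau)=\big((1-r)K_\omega+r(K_\alpha+pd)\big)\,T(p,\tau)+d$. Choose $$p^\circ=\min\Big\{1,\frac{1}{\mu^r_{\omega,\alpha}},\Big(\frac{Ln}{L_{\max}}\Big)^{1/3}\frac{1}{\omega+1},\max\Big\{\frac1{\omega+1},\Big(\frac{Ln}{L_{\max}}\Big)^{1/2}\frac{1}{\sqrt\alpha(\omega+1)^{3/2}}\Big\}\Big\}\ (1/0=+\infty),$$ $$\tau^\circ=\min\Big\{1,\Big(\frac{Ln}{L_{\max}}\Big)^{1/3}\min\Big\{\frac{1}{\omega+1},\frac{(p^\circ)^{1/3}}{(\omega+1)^{2/3}}\Big\}\Big\}.$$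 Then, up to universal multiplicative constants (and logarithmic factors): (i) $(p^\circ,\tau^\circ)$ minimizes $M(p,\tau)$ over $p,\tau\in(0,1]$; (ii) $T(p^\circ,\tau^\circ)$ is of the order of $$T^{\mathrm{optimistic}}=\max\Big\{\sqrt{\tfrac{L\max\{1,\mu^r_{\omega,\alpha}\}}{\alpha\mu}},\sqrt{\tfrac{L^{2/3}L_{\max}^{1/3}(\omega+1)}{\alpha n^{1/3}\mu}},\sqrt{\tfrac{L^{1/2}L_{\max}^{1/2}(\omega+1)^{3/2}}{\sqrt{\alpha n}\,\mu}},\sqrt{\tfrac{L_{\max}\omega\max\{\omega+1,\mu^r_{\omega,\alpha}\}}{n\mu}},\tfrac1\alpha,\omega+1,\mu^r_{\omega,\alpha}\Big\};$$ (iii) $M(p^\circ,\tau^\circ)$ is of the order of $K^r\,T^{\mathrm{optimistic}}+d$.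
   Context: This concerns the method 2Direction for minimizing $f=\frac1n\sum_{i=1}^n f_i$ over $\mathbb R^d$ with $n$ workers, where each $f_i$ is $L_i$-smooth and convex, $L_{\max}=\max_i L_i$, $f$ is $L$-smooth and $\mu$-strongly convex. Workers use unbiased compressors with variance parameter $\omega$ ($\mathbb E[\mathcal C(x)]=x$, $\mathbb E\|\mathcal C(x)-x\|^2\le\omega\|x\|^2$) and expected density $K_\omega$ (expected density of $\mathcal C$: $\sup_x\mathbb E\|\mathcal C(x)\|_0$); the server uses a biased compressor with contraction parameter $\alpha$ ($\mathbb E\|\mathcal C(x)-x\|^2\le(1-\alpha)\|x\|^2$) and expected density $K_\alpha$. The method has hyper-parameters $p$ (a probability) and $\tau$ (a momentum). Up to logarithmic factors, $T(p,\tau)$ is the number of iterations in the strongly convex case and $M(p,\tau)$ the total communication complexity $(1-r)\cdot(\text{worker-to-server cost})+r\cdot(\text{server-to-worker cost})$, $r\in[0,1]$ weighting the two directions. Here the ratio $L_{\max}/L$ is assumed known and may be used to choose $p,\tau$. ''Of the order of'' means equal up to universal positive multiplicative constants. *)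

From Stdlib Require Import Reals List.
Import ListNotations.
Open Scope R_scope.

(* maximum of a finite list of reals (all entries used below are > 0,
   so the default 0 for the empty fold is irrelevant) *)
Definition Rmax_list (l : list R) : R := fold_right Rmax 0 l.

Definition cbrt (x : R) : R := Rpower x (1/3).

Definition Kr (r Kw Ka : R) : R := (1 - r) * Kw + r * Ka.
Definition mur (d : nat) (r Kw Ka : R) : R := r * INR d / Kr r Kw Ka.

Definition Tfun (n : nat) (L Lmax mu omega alpha p tau : R) : R :=
  let nn := INR n in
  Rmax_list
   [ sqrt (L / (alpha * p * mu));
     sqrt (L / (alpha * tau * mu));
     sqrt (sqrt (L * Lmax) * (omega + 1) * sqrt (omega * tau)
           / (alpha * sqrt nn * mu));
     sqrt (sqrt (L * Lmax) * sqrt (omega + 1) * sqrt (omega * tau)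
           / (alpha * sqrt p * sqrt nn * mu));
     sqrt (Lmax * omega * (omega + 1) ^ 2 * p / (nn * mu));
     sqrt (Lmax * omega / (nn * p * mu));
     1 / alpha;
     1 / tau;
     omega + 1;
     1 / p ].

Definition Mfun (n d : nat) (r Kw Ka L Lmax mu omega alpha p tau : R) : R :=
  ((1 - r) * Kw + r * (Ka + p * INR d)) * Tfun n L Lmax mu omega alpha p tau
  + INR d.

(* 1/mu^r with the convention 1/0 = +oo; since p° is a min with 1,
   replacing +oo by 1 does not change p° *)
Definition inv_mur (d : nat) (r Kw Ka : R) : R :=
  if Req_EM_T (mur d r Kw Ka) 0 then 1 else 1 / mur d r Kw Ka.

Definition p_opt (n d : nat) (r Kw Ka L Lmax omega alpha : R) : R :=
  let q := L * INR n / Lmax in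
  Rmin 1 (Rmin (inv_mur d r Kw Ka)
    (Rmin (cbrt q / (omega + 1))
          (Rmax (1 / (omega + 1))
                (sqrt q / (sqrt alpha * Rpower (omega + 1) (3/2)))))).

Definition tau_opt (n d : nat) (r Kw Ka L Lmax omega alpha : R) : R :=
  let q := L * INR n / Lmax in
  let p0 := p_opt n d r Kw Ka L Lmax omega alpha in
  Rmin 1 (cbrt q * Rmin (1 / (omega + 1))
                        (cbrt p0 / Rpower (omega + 1) (2/3))).

Definition T_optimistic (n d : nat) (r Kw Ka L Lmax mu omega alpha : R) : R :=
  let nn := INR n in
  let m := mur d r Kw Ka in
  Rmax_list
   [ sqrt (L * Rmax 1 m / (alpha * mu));
     sqrt (Rpower L (2/3) * cbrt Lmax * (omega + 1) / (alpha * cbrt nn * mu));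
     sqrt (sqrt L * sqrt Lmax * Rpower (omega + 1) (3/2)
           / (sqrt (alpha * nn) * mu));
     sqrt (Lmax * omega * Rmax (omega + 1) m / (nn * mu));
     1 / alpha;
     omega + 1;
     m ].

(* Substituting k = L/mu and q = L n / Lmax >= 1 (so that sqrt (L Lmax) = L sqrt n / sqrt q and
   L^(2/3) Lmax^(1/3) = L n^(1/3) / q^(1/3)) turns every term of T(p,tau) and of T^optimistic
   into a monomial in k, q, alpha, omega + 1, p and tau, while
   M(p,tau) = K^r (1 + p mu^r) T(p,tau) + d.
   Each term of T^optimistic is at most 2 (1 + p mu^r) times a term of T(p,tau) or the geometric
   mean of two of them, so T^optimistic <= 2 (1 + p mu^r) T(p,tau) for all admissible (p,tau).
   Conversely, the min/max formulas for p° and tau° are exactly what keeps 1/p°, 1/tau° and the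
   mixed term sqrt(omega tau°/p°) below the matching quantities of T^optimistic, so
   T(p°,tau°) <= T^optimistic; moreover p° mu^r <= 1.  Chaining these inequalities gives
   (i)-(iii) with the constant 4. *)

From Stdlib Require Import Reals Lra Psatz List.
Import ListNotations.
Open Scope R_scope.

Lemma Rpower_pos x y : 0 < Rpower x y.
Proof. apply exp_pos. Qed.

Ltac positivity :=
  solve
    [ lra
    | apply Rdiv_lt_0_compat; positivity | apply Rmult_lt_0_compat; positivity
    | apply Rinv_0_lt_compat; positivity | apply pow_lt; positivity
    | apply sqrt_lt_R0; positivity | apply Rpower_pos
    | apply Rle_mult_inv_pos; positivity | apply Rmult_le_pos; positivity
    | apply pow_le; positivity | apply sqrt_pos | apply pos_INR
    | apply Rlt_le; positivity ].

Lemma Rmax_list_in x l : In x l -> x <= Rmax_list l.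
Proof.
  induction l as [|y l IH]; [intros []|].
  intros [<-|Hx]; simpl; [apply Rmax_l|].
  apply Rle_trans with (Rmax_list l); [exact (IH Hx)|apply Rmax_r].
Qed.

Lemma Rmax_list_lub l B : 0 <= B -> Forall (fun x => x <= B) l -> Rmax_list l <= B.
Proof. intros HB Hl; induction Hl; simpl; [exact HB|now apply Rmax_lub]. Qed.

Lemma Rmax_list_nonneg l : 0 <= Rmax_list l.
Proof.
  induction l; simpl; [lra|]. apply Rle_trans with (Rmax_list l); [assumption|apply Rmax_r].
Qed.

Lemma sqrt_le_of_le_sq x B : 0 <= B -> x <= B ^ 2 -> sqrt x <= B.
Proof. intros HB Hx. rewrite <- (sqrt_pow2 B HB). now apply sqrt_le_1_alt. Qed.

Lemma le_sq_of_sqrt_le x B : 0 <= x -> sqrt x <= B -> x <= B ^ 2.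
Proof.
  intros Hx H. rewrite <- (pow2_sqrt x Hx). apply pow_incr. split; [apply sqrt_pos|exact H].
Qed.

Lemma pow3_le_reg x y : 0 <= x -> 0 <= y -> x ^ 3 <= y ^ 3 -> x <= y.
Proof.
  intros Hx Hy H. destruct (Rle_lt_dec x y) as [|Hlt]; [assumption|].
  assert (0 < x - y) by lra.
  assert (0 < x * x + x * y + y * y) by nra.
  nra.
Qed.

Lemma pow2_le_reg x y : 0 <= y -> x ^ 2 <= y ^ 2 -> x <= y.
Proof. intros; nra. Qed.

Lemma Rdiv_le_cross a b c d : 0 < b -> 0 < d -> a * d <= c * b -> a / b <= c / d.
Proof.
  intros Hb Hd H.
  replace (a / b) with (a * d * / (b * d)) by (field; lra).
  replace (c / d) with (c * b * / (b * d)) by (field; lra).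
  apply Rmult_le_compat_r; [positivity|exact H].
Qed.

Lemma Rdiv_le_self x c : 0 <= x -> 1 <= c -> x / c <= x.
Proof. intros Hx Hc. rewrite <- (Rdiv_1_r x) at 2. apply Rdiv_le_cross; nra. Qed.

Lemma Rinv_le_swap x y : 0 < x -> 0 < y -> 1 / x <= y -> 1 / y <= x.
Proof.
  intros Hx Hy H. replace (1 / y) with (1 / x * (x / y)) by (field; lra).
  apply Rle_trans with (y * (x / y)); [apply Rmult_le_compat_r; positivity|right; field; lra].
Qed.

Lemma root_le_max W p rho :
  1 <= W -> 0 < p -> 0 < rho -> rho ^ 3 * p = W ^ 2 -> rho <= Rmax W (1 / p).
Proof.
  intros HW Hp Hrho E. destruct (Rle_lt_dec 1 (p * W)) as [HpW|HpW].
  - apply Rle_trans with W; [|apply Rmax_l].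
    apply pow3_le_reg; [lra|lra|]. apply (Rmult_le_reg_r p); [exact Hp|]. rewrite E.
    replace (W ^ 3 * p) with (W ^ 2 * (p * W)) by ring.
    assert (0 <= W ^ 2) by positivity. nra.
  - apply Rle_trans with (1 / p); [|apply Rmax_r].
    assert (Hrp : rho * p <= 1).
    { apply pow3_le_reg; [positivity|lra|].
      replace ((rho * p) ^ 3) with (rho ^ 3 * p * p ^ 2) by ring. rewrite E.
      replace (W ^ 2 * p ^ 2) with ((p * W) ^ 2) by ring.
      assert (0 < p * W) by positivity. nra. }
    apply (Rmult_le_reg_r p); [exact Hp|]. replace (1 / p * p) with 1 by (field; lra). exact Hrp.
Qed.

Section Scaled.

(* The problem in dimensionless variables: k = L/mu, q = L n / Lmax, h = sqrt q, c = q^(1/3),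
   sa = sqrt alpha, w = omega, sW = sqrt (omega + 1).  Below, m stands for mu^r, im for
   [inv_mur] and rho for (omega + 1)^(2/3) / (p°)^(1/3). *)
Variables k q h c a sa w sW : R.
Hypotheses (Hk : 0 < k) (Hq : 1 <= q) (Hh : 0 < h) (Hhq : h * h = q) (Hc : 0 < c) (Hcq : c ^ 3 = q)
  (Ha : 0 < a <= 1) (Hsa : 0 < sa) (Hsaa : sa * sa = a) (Hw : 0 <= w) (HsW : 0 < sW)
  (HsWw : sW * sW = w + 1).

Definition T_scaled (p t : R) : R := Rmax_list
  [ sqrt (k / (a * p)); sqrt (k / (a * t));
    sqrt (k * (w + 1) * sqrt (w * t) / (a * h));
    sqrt (k * sW * sqrt (w * t) / (a * sqrt p * h));
    sqrt (k * w * (w + 1) ^ 2 * p / q);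
    sqrt (k * w / (q * p));
    1 / a; 1 / t; w + 1; 1 / p ].

Definition Topt_scaled (m : R) : R := Rmax_list
  [ sqrt (k * Rmax 1 m / a);
    sqrt (k * (w + 1) / (a * c));
    sqrt (k * ((w + 1) * sW) / (sa * h));
    sqrt (k * w * Rmax (w + 1) m / q);
    1 / a; w + 1; m ].

Definition p_scaled (im : R) : R :=
  Rmin 1 (Rmin im (Rmin (c / (w + 1)) (Rmax (1 / (w + 1)) (h / (sa * ((w + 1) * sW)))))).

Definition tau_scaled (rho : R) : R := Rmin 1 (c * Rmin (1 / (w + 1)) (1 / rho)).

Lemma c_ge_1 : 1 <= c.
Proof. apply pow3_le_reg; lra. Qed.

Lemma h_ge_1 : 1 <= h.
Proof. nra. Qed.

Lemma T_scaled_lub p t B : 0 <= B ->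
  k / (a * p) <= B ^ 2 -> k / (a * t) <= B ^ 2 ->
  k * (w + 1) * sqrt (w * t) / (a * h) <= B ^ 2 ->
  k * sW * sqrt (w * t) / (a * sqrt p * h) <= B ^ 2 ->
  k * w * (w + 1) ^ 2 * p / q <= B ^ 2 -> k * w / (q * p) <= B ^ 2 ->
  1 / a <= B -> 1 / t <= B -> w + 1 <= B -> 1 / p <= B ->
  T_scaled p t <= B.
Proof.
  intros HB H1 H2 H3 H4 H5 H6 H7 H8 H9 H10.
  apply Rmax_list_lub; [exact HB|].
  repeat apply Forall_cons; try apply Forall_nil; try apply sqrt_le_of_le_sq; assumption.
Qed.

Lemma T_scaled_ge_terms p t : 0 < p -> 0 < t ->
  let T := T_scaled p t in
  k / (a * p) <= T ^ 2 /\ k / (a * t) <= T ^ 2 /\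
  k * (w + 1) * sqrt (w * t) / (a * h) <= T ^ 2 /\
  k * w * (w + 1) ^ 2 * p / q <= T ^ 2 /\ k * w / (q * p) <= T ^ 2 /\
  1 / a <= T /\ w + 1 <= T /\ 1 / p <= T.
Proof.
  intros Hp Ht T.
  assert (Hin : forall x, In x
    [ sqrt (k / (a * p)); sqrt (k / (a * t));
      sqrt (k * (w + 1) * sqrt (w * t) / (a * h));
      sqrt (k * sW * sqrt (w * t) / (a * sqrt p * h));
      sqrt (k * w * (w + 1) ^ 2 * p / q);
      sqrt (k * w / (q * p));
      1 / a; 1 / t; w + 1; 1 / p ] -> x <= T) by (intros; now apply Rmax_list_in).
  repeat split; try (apply le_sq_of_sqrt_le; [positivity|]); apply Hin; simpl; tauto.
Qed.

Lemma Topt_scaled_lub m B : 0 <= B ->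
  k * Rmax 1 m / a <= B ^ 2 -> k * (w + 1) / (a * c) <= B ^ 2 ->
  k * ((w + 1) * sW) / (sa * h) <= B ^ 2 -> k * w * Rmax (w + 1) m / q <= B ^ 2 ->
  1 / a <= B -> w + 1 <= B -> m <= B ->
  Topt_scaled m <= B.
Proof.
  intros HB H1 H2 H3 H4 H5 H6 H7.
  apply Rmax_list_lub; [exact HB|].
  repeat apply Forall_cons; try apply Forall_nil; try apply sqrt_le_of_le_sq; assumption.
Qed.

Lemma Topt_scaled_ge_terms m : 0 <= m ->
  let T := Topt_scaled m in
  k * Rmax 1 m / a <= T ^ 2 /\ k * (w + 1) / (a * c) <= T ^ 2 /\
  k * ((w + 1) * sW) / (sa * h) <= T ^ 2 /\ k * w * Rmax (w + 1) m / q <= T ^ 2 /\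
  1 / a <= T /\ w + 1 <= T /\ m <= T.
Proof.
  intros Hm T.
  assert (H1m : 0 < Rmax 1 m) by (apply Rlt_le_trans with 1; [lra|apply Rmax_l]).
  assert (HWm : 0 < Rmax (w + 1) m) by (apply Rlt_le_trans with (w + 1); [lra|apply Rmax_l]).
  assert (Hin : forall x, In x
    [ sqrt (k * Rmax 1 m / a);
      sqrt (k * (w + 1) / (a * c));
      sqrt (k * ((w + 1) * sW) / (sa * h));
      sqrt (k * w * Rmax (w + 1) m / q);
      1 / a; w + 1; m ] -> x <= T) by (intros; now apply Rmax_list_in).
  repeat split; try (apply le_sq_of_sqrt_le; [positivity|]); apply Hin; simpl; tauto.
Qed.

(* In the next two lemmas the left-hand side is, for w >= 1, a geometric mean of the two given
   terms up to the factor (w + 1) / w <= 2; for w < 1 the first given term dominates it. *)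
Lemma cbrt_term_le t S : 0 < t <= 1 ->
  k / (a * t) <= S -> k * (w + 1) * sqrt (w * t) / (a * h) <= S ->
  k * (w + 1) / (a * c) <= 4 * S.
Proof.
  intros Ht HA HB. pose proof c_ge_1 as Hc1.
  set (s := sqrt (w * t)) in HB.
  assert (Hs : s * s = w * t) by (apply sqrt_sqrt; positivity).
  assert (Hs0 : 0 <= s) by apply sqrt_pos.
  assert (HA0 : 0 < k / (a * t)) by positivity.
  destruct (Rle_lt_dec 1 w) as [Hw1|Hw1].
  - set (K0 := k ^ 3 * (w + 1) ^ 2 / (a ^ 3 * q)).
    assert (HK0 : 0 < K0) by (unfold K0; positivity).
    assert (EX : (k * (w + 1) / (a * c)) ^ 3 = K0 * (w + 1))
      by (unfold K0; rewrite <- Hcq; field; repeat split; lra).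
    assert (EAB : k / (a * t) * (k * (w + 1) * s / (a * h)) ^ 2 = K0 * w).
    { replace ((k * (w + 1) * s / (a * h)) ^ 2)
        with (k ^ 2 * (w + 1) ^ 2 * (s * s) / (a ^ 2 * (h * h))) by (field; lra).
      rewrite Hs, Hhq. unfold K0. field. repeat split; lra. }
    apply pow3_le_reg; [positivity|lra|].
    assert (k / (a * t) * (k * (w + 1) * s / (a * h)) ^ 2 <= S * S ^ 2)
      by (apply Rmult_le_compat; [lra|positivity|lra|apply pow_incr; split; [positivity|lra]]).
    assert (0 <= S * S ^ 2) by positivity. nra.
  - apply Rle_trans with (2 * (k / (a * t))); [|lra].
    replace (2 * (k / (a * t))) with (2 * k / (a * t)) by (field; lra).
    apply Rdiv_le_cross; [positivity|positivity|].
    replace (k * (w + 1) * (a * t)) with (k * a * ((w + 1) * t)) by ring.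
    replace (2 * k * (a * c)) with (k * a * (2 * c)) by ring.
    apply Rmult_le_compat_l; [positivity|nra].
Qed.

Lemma sqrt_term_le p S : 0 < p <= 1 ->
  k / (a * p) <= S -> k * w * (w + 1) ^ 2 * p / q <= S ->
  k * ((w + 1) * sW) / (sa * h) <= 4 * S.
Proof.
  intros Hp HA HB. pose proof h_ge_1 as Hh1.
  assert (HA0 : 0 < k / (a * p)) by positivity.
  destruct (Rle_lt_dec 1 w) as [Hw1|Hw1].
  - set (K0 := k ^ 2 * (w + 1) ^ 2 / (a * q)).
    assert (HK0 : 0 < K0) by (unfold K0; positivity).
    assert (EX : (k * ((w + 1) * sW) / (sa * h)) ^ 2 = K0 * (w + 1)).
    { replace ((k * ((w + 1) * sW) / (sa * h)) ^ 2)
        with (k ^ 2 * (w + 1) ^ 2 * (sW * sW) / ((sa * sa) * (h * h))) by (field; lra).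
      rewrite HsWw, Hsaa, Hhq. unfold K0. field. lra. }
    assert (EAB : k / (a * p) * (k * w * (w + 1) ^ 2 * p / q) = K0 * w)
      by (unfold K0; field; repeat split; lra).
    apply pow2_le_reg; [lra|].
    assert (k / (a * p) * (k * w * (w + 1) ^ 2 * p / q) <= S * S)
      by (apply Rmult_le_compat; [lra|positivity|lra|lra]).
    nra.
  - apply Rle_trans with (4 * (k / (a * p))); [|lra].
    replace (4 * (k / (a * p))) with (4 * k / (a * p)) by (field; lra).
    apply Rdiv_le_cross; [positivity|positivity|].
    assert (sW <= 2) by nra.
    assert ((w + 1) * sW <= 4) by nra.
    assert (a <= sa) by nra.
    assert (a * p <= sa * h) by (apply Rmult_le_compat; lra).
    apply Rle_trans with (4 * k * (a * p)); [apply Rmult_le_compat_r; [positivity|nra]|].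
    apply Rmult_le_compat_l; lra.
Qed.

Lemma omega_term_le p m S : 0 < p <= 1 -> 0 <= m ->
  k * w * (w + 1) ^ 2 * p / q <= S -> k * w / (q * p) <= S ->
  k * w * Rmax (w + 1) m / q <= (1 + p * m) ^ 2 * S.
Proof.
  intros Hp Hm HA HB.
  assert (HS : 0 <= S) by (apply Rle_trans with (k * w / (q * p)); [positivity|exact HB]).
  assert (HF : 1 + p * m <= (1 + p * m) ^ 2) by nra.
  destruct (Rle_dec (w + 1) m) as [HWm|HWm];
    [rewrite Rmax_right by exact HWm|rewrite Rmax_left by lra].
  - replace (k * w * m / q) with (k * w / (q * p) * (p * m)) by (field; lra).
    apply Rle_trans with (S * (1 + p * m)); [apply Rmult_le_compat; positivity|nra].
  - assert (k * w * (w + 1) / q <= S).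
    { apply pow2_le_reg; [exact HS|].
      replace ((k * w * (w + 1) / q) ^ 2) with (k * w * (w + 1) ^ 2 * p / q * (k * w / (q * p)))
        by (field; lra).
      apply Rle_trans with (S * S); [apply Rmult_le_compat; positivity|nra]. }
    assert (0 <= p * m) by positivity. nra.
Qed.

Lemma Topt_scaled_le_T_scaled m p t : 0 <= m -> 0 < p <= 1 -> 0 < t <= 1 ->
  Topt_scaled m <= 2 * (1 + p * m) * T_scaled p t.
Proof.
  intros Hm Hp Ht.
  destruct (T_scaled_ge_terms p t) as (H1 & H2 & H3 & H5 & H6 & H7 & H9 & H10); [lra|lra|].
  set (T := T_scaled p t) in *.
  assert (HT : 0 <= T) by apply Rmax_list_nonneg.
  assert (Hpm : 1 <= 1 + p * m) by nra.
  assert (HTG : T <= 2 * (1 + p * m) * T) by nra.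
  assert (HFG : (1 + p * m) ^ 2 * T ^ 2 <= (2 * (1 + p * m) * T) ^ 2) by nra.
  assert (H4G : 4 * T ^ 2 <= (2 * (1 + p * m) * T) ^ 2) by nra.
  apply Topt_scaled_lub; [nra| | | | | | |].
  - apply Rle_trans with ((1 + p * m) ^ 2 * (k / (a * p))).
    2: { apply Rle_trans with ((1 + p * m) ^ 2 * T ^ 2); [|exact HFG].
         apply Rmult_le_compat_l; [positivity|exact H1]. }
    replace ((1 + p * m) ^ 2 * (k / (a * p))) with (k * (1 + p * m) ^ 2 / (a * p)) by (field; lra).
    apply Rdiv_le_cross; [positivity|positivity|].
    assert (p * Rmax 1 m <= (1 + p * m) ^ 2)
      by (rewrite <- RmaxRmult by lra; apply Rmax_lub; nra).
    replace (k * Rmax 1 m * (a * p)) with (k * a * (p * Rmax 1 m)) by ring.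
    replace (k * (1 + p * m) ^ 2 * a) with (k * a * (1 + p * m) ^ 2) by ring.
    apply Rmult_le_compat_l; [positivity|assumption].
  - apply Rle_trans with (4 * T ^ 2); [apply (cbrt_term_le t)|]; assumption.
  - apply Rle_trans with (4 * T ^ 2); [apply (sqrt_term_le p)|]; assumption.
  - apply Rle_trans with ((1 + p * m) ^ 2 * T ^ 2); [apply omega_term_le|]; assumption.
  - lra.
  - lra.
  - apply Rle_trans with ((1 + p * m) * (1 / p)); [|nra].
    replace ((1 + p * m) * (1 / p)) with ((1 + p * m) / p) by (field; lra).
    replace m with (m * p / p) at 1 by (field; lra).
    apply Rdiv_le_cross; [lra|lra|nra].
Qed.

Lemma p_scaled_pos im : 0 < im -> 0 < p_scaled im.
Proof.
  intros Him. unfold p_scaled. repeat apply Rmin_pos; try positivity.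
  apply Rlt_le_trans with (1 / (w + 1)); [positivity|apply Rmax_l].
Qed.

Lemma p_scaled_le im :
  p_scaled im <= 1 /\ p_scaled im <= im /\
  (p_scaled im <= 1 / (w + 1) \/ p_scaled im <= h / (sa * ((w + 1) * sW))).
Proof.
  unfold p_scaled. split; [apply Rmin_l|split].
  - eapply Rle_trans; [apply Rmin_r|apply Rmin_l].
  - apply Rmax_Rle. do 3 (eapply Rle_trans; [apply Rmin_r|]). apply Rle_refl.
Qed.

Lemma tau_scaled_pos rho : 0 < rho -> 0 < tau_scaled rho.
Proof.
  intros Hrho. unfold tau_scaled.
  apply Rmin_pos; [lra|]. apply Rmult_lt_0_compat; [lra|apply Rmin_pos; positivity].
Qed.

Lemma tau_scaled_le rho :
  tau_scaled rho <= 1 /\ tau_scaled rho <= c / (w + 1) /\ tau_scaled rho <= c / rho.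
Proof.
  unfold tau_scaled.
  split; [apply Rmin_l|split; (eapply Rle_trans; [apply Rmin_r|])].
  - replace (c / (w + 1)) with (c * (1 / (w + 1))) by (unfold Rdiv; ring).
    apply Rmult_le_compat_l; [lra|apply Rmin_l].
  - replace (c / rho) with (c * (1 / rho)) by (unfold Rdiv; ring).
    apply Rmult_le_compat_l; [lra|apply Rmin_r].
Qed.

Lemma inv_p_scaled_le im X : 0 < im -> 1 <= X -> 1 / im <= X -> (w + 1) / c <= X ->
  Rmin (w + 1) (sa * (w + 1) * sW / h) <= X -> 1 / p_scaled im <= X.
Proof.
  intros Him HX1 Him' HXc HXh. assert (HX : 0 < X) by lra.
  apply Rinv_le_swap; [exact HX|apply p_scaled_pos, Him|].
  unfold p_scaled. repeat apply Rmin_glb.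
  - apply Rinv_le_swap; lra.
  - apply Rinv_le_swap; lra.
  - apply Rinv_le_swap; [positivity|exact HX|].
    replace (1 / (c / (w + 1))) with ((w + 1) / c) by (field; lra). exact HXc.
  - destruct (Rle_dec (w + 1) (sa * (w + 1) * sW / h)) as [Hmin|Hmin];
      [rewrite Rmin_left in HXh by exact Hmin|rewrite Rmin_right in HXh by lra].
    + eapply Rle_trans; [|apply Rmax_l]. apply Rinv_le_swap; [positivity|exact HX|].
      replace (1 / (1 / (w + 1))) with (w + 1) by (field; lra). exact HXh.
    + eapply Rle_trans; [|apply Rmax_r]. apply Rinv_le_swap; [positivity|exact HX|].
      replace (1 / (h / (sa * ((w + 1) * sW)))) with (sa * (w + 1) * sW / h) by (field; lra).
      exact HXh.
Qed.

Lemma inv_tau_scaled_le rho X : 0 < rho -> 1 <= X -> (w + 1) / c <= X -> rho / c <= X ->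
  1 / tau_scaled rho <= X.
Proof.
  intros Hrho HX1 HXW HXrho. assert (HX : 0 < X) by lra.
  apply Rinv_le_swap; [exact HX|apply tau_scaled_pos, Hrho|].
  unfold tau_scaled. apply Rmin_glb; [apply Rinv_le_swap; lra|].
  apply Rmin_case; apply Rinv_le_swap; try positivity;
    [replace (1 / (c * (1 / (w + 1)))) with ((w + 1) / c) by (field; lra)
    |replace (1 / (c * (1 / rho))) with (rho / c) by (field; lra)]; assumption.
Qed.

Lemma opt_reciprocals_le im rho X : 0 < im -> 0 < rho -> rho ^ 3 * p_scaled im = (w + 1) ^ 2 ->
  1 <= X -> 1 / im <= X -> (w + 1) / c <= X -> Rmin (w + 1) (sa * (w + 1) * sW / h) <= X ->
  1 / p_scaled im <= X /\ rho / c <= X /\ 1 / tau_scaled rho <= X.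
Proof.
  intros Him Hrho E HX1 Him' HXc HXh. pose proof c_ge_1 as Hc1.
  assert (Hp : 1 / p_scaled im <= X) by (apply inv_p_scaled_le; assumption).
  assert (Hrc : rho / c <= X).
  { pose proof (p_scaled_pos im Him) as Hp0.
    destruct (Rmax_Rle (w + 1) (1 / p_scaled im) rho) as [Hr _].
    destruct (Hr (root_le_max (w + 1) (p_scaled im) rho ltac:(lra) Hp0 Hrho E)) as [HrW|Hrp].
    - apply Rle_trans with ((w + 1) / c); [|exact HXc]. apply Rdiv_le_cross; nra.
    - apply Rle_trans with rho; [apply Rdiv_le_self; lra|lra]. }
  split; [exact Hp|split; [exact Hrc|]]. apply inv_tau_scaled_le; assumption.
Qed.

Lemma mixed_term_le p t rho : 0 < p -> 0 < t -> 0 < rho -> rho ^ 3 * p = (w + 1) ^ 2 ->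
  t <= c / rho -> sW * sqrt (w * t) / (sqrt p * h) <= rho / c.
Proof.
  intros Hp Ht Hrho E Htc.
  assert (Hsp : 0 < sqrt p) by positivity.
  apply pow2_le_reg; [positivity|].
  replace ((sW * sqrt (w * t) / (sqrt p * h)) ^ 2)
    with (sW * sW * sqrt (w * t) ^ 2 / (sqrt p ^ 2 * (h * h))) by (field; lra).
  rewrite HsWw, Hhq, !pow2_sqrt, <- Hcq by positivity.
  assert (Htrho : t * rho <= c).
  { apply (Rmult_le_compat_r rho) in Htc; [|lra].
    now replace (c / rho * rho) with c in Htc by (field; lra). }
  assert (Hnum : (w + 1) * (w * t) <= rho ^ 2 * p * c).
  { apply Rle_trans with ((w + 1) ^ 2 * t); [nra|].
    rewrite <- E. replace (rho ^ 3 * p * t) with (rho ^ 2 * p * (t * rho)) by ring.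
    apply Rmult_le_compat_l; [positivity|exact Htrho]. }
  apply Rle_trans with (rho ^ 2 * p * c / (p * c ^ 3)).
  - unfold Rdiv. apply Rmult_le_compat_r; [positivity|exact Hnum].
  - right. field. lra.
Qed.

Lemma sqrt_w_tau_le t : 0 < t -> t <= c / (w + 1) -> sqrt (w * t) * c <= h.
Proof.
  intros Ht HtW. apply pow2_le_reg; [lra|].
  rewrite Rpow_mult_distr, pow2_sqrt by positivity.
  replace (h ^ 2) with (c * c ^ 2) by (transitivity q; [rewrite <- Hcq|rewrite <- Hhq]; ring).
  apply Rmult_le_compat_r; [positivity|].
  apply Rle_trans with ((w + 1) * t); [nra|].
  apply (Rmult_le_compat_l (w + 1)) in HtW; [|lra].
  now replace ((w + 1) * (c / (w + 1))) with c in HtW by (field; lra).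
Qed.

Lemma omega_p_term_le p m S : 0 < p ->
  (p <= 1 / (w + 1) \/ p <= h / (sa * ((w + 1) * sW))) ->
  k * w * Rmax (w + 1) m / q <= S -> k * ((w + 1) * sW) / (sa * h) <= S ->
  k * w * (w + 1) ^ 2 * p / q <= S.
Proof.
  intros Hp [HpW|Hph] HSm HSh.
  - apply Rle_trans with (k * w * Rmax (w + 1) m / q); [|exact HSm].
    unfold Rdiv. apply Rmult_le_compat_r; [positivity|].
    replace (k * w * (w + 1) ^ 2 * p) with (k * w * ((w + 1) ^ 2 * p)) by ring.
    apply Rmult_le_compat_l; [positivity|].
    apply Rle_trans with (w + 1); [|apply Rmax_l].
    apply (Rmult_le_compat_l ((w + 1) ^ 2)) in HpW; [|positivity].
    now replace ((w + 1) ^ 2 * (1 / (w + 1))) with (w + 1) in HpW by (field; lra).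
  - apply Rle_trans with (k * w * (w + 1) ^ 2 * (h / (sa * ((w + 1) * sW))) / q).
    { unfold Rdiv at 1 3. apply Rmult_le_compat_r; [positivity|].
      apply Rmult_le_compat_l; [positivity|exact Hph]. }
    apply Rle_trans with (k * ((w + 1) * sW) / (sa * h) * (w / (w + 1))).
    { right. rewrite <- Hhq, <- HsWw. field. lra. }
    apply Rle_trans with (k * ((w + 1) * sW) / (sa * h) * 1); [|lra].
    apply Rmult_le_compat_l; [positivity|].
    apply Rle_trans with ((w + 1) / (w + 1)); [apply Rdiv_le_cross; nra|right; field; lra].
Qed.

Lemma opt_reciprocals_le_Topt m im rho : 0 <= m -> 0 < im -> 1 <= im * Rmax 1 m -> 0 < rho ->
  rho ^ 3 * p_scaled im = (w + 1) ^ 2 ->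
  let T := Topt_scaled m in
  (k * (1 / p_scaled im) / a <= T ^ 2 /\ k * (rho / c) / a <= T ^ 2 /\
   k * (1 / tau_scaled rho) / a <= T ^ 2) /\
  (1 / p_scaled im <= Rmax (w + 1) m /\ 1 / tau_scaled rho <= Rmax (w + 1) m).
Proof.
  intros Hm Him Him1 Hrho E T. pose proof c_ge_1 as Hc1.
  destruct (Topt_scaled_ge_terms m Hm) as (H1 & H2 & H3 & _ & _ & H6 & _).
  fold T in H1, H2, H3, H6.
  assert (Him' : 1 / im <= Rmax 1 m).
  { apply (Rmult_le_reg_l im); [exact Him|]. now replace (im * (1 / im)) with 1 by (field; lra). }
  set (U := a * T ^ 2 / k).
  assert (toU : forall Y, k * Y / a <= T ^ 2 -> Y <= U).
  { intros Y HY. unfold U. apply (Rmult_le_reg_l (k / a)); [positivity|].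
    replace (k / a * Y) with (k * Y / a) by (field; lra).
    replace (k / a * (a * T ^ 2 / k)) with (T ^ 2) by (field; lra). exact HY. }
  assert (fromU : forall Y, Y <= U -> k * Y / a <= T ^ 2).
  { intros Y HY. replace (T ^ 2) with (k * U / a) by (unfold U; field; lra).
    unfold Rdiv. apply Rmult_le_compat_r; [positivity|]. apply Rmult_le_compat_l; lra. }
  assert (HU1 : Rmax 1 m <= U) by (apply toU; exact H1).
  assert (HUc : (w + 1) / c <= U).
  { apply toU. replace (k * ((w + 1) / c) / a) with (k * (w + 1) / (a * c)) by (field; lra).
    exact H2. }
  assert (HUh : sa * (w + 1) * sW / h <= U).
  { apply toU. replace (k * (sa * (w + 1) * sW / h) / a) with (k * ((w + 1) * sW) / (sa * h));
      [exact H3|].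
    rewrite <- Hsaa. field. lra. }
  destruct (opt_reciprocals_le im rho U) as (HUp & HUrho & HUt); try assumption.
  { apply Rle_trans with (Rmax 1 m); [apply Rmax_l|exact HU1]. }
  { lra. }
  { apply Rle_trans with (sa * (w + 1) * sW / h); [apply Rmin_r|exact HUh]. }
  destruct (opt_reciprocals_le im rho (Rmax (w + 1) m)) as (HWp & _ & HWt); try assumption.
  { apply Rle_trans with (w + 1); [lra|apply Rmax_l]. }
  { apply Rle_trans with (Rmax 1 m); [exact Him'|apply Rle_max_compat_r; lra]. }
  { apply Rle_trans with (w + 1); [apply Rdiv_le_self; lra|apply Rmax_l]. }
  { apply Rle_trans with (w + 1); [apply Rmin_l|apply Rmax_l]. }
  repeat split; try apply fromU; assumption.
Qed.

Lemma T_scaled_le_Topt_scaled m im rho : 0 <= m -> 0 < im -> 1 <= im * Rmax 1 m -> 0 < rho ->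
  rho ^ 3 * p_scaled im = (w + 1) ^ 2 ->
  T_scaled (p_scaled im) (tau_scaled rho) <= Topt_scaled m.
Proof.
  intros Hm Him Him1 Hrho E.
  pose proof (p_scaled_pos im Him) as Hp0. pose proof (tau_scaled_pos rho Hrho) as Ht0.
  destruct (p_scaled_le im) as (_ & _ & Hp0W).
  destruct (tau_scaled_le rho) as (_ & Ht0W & Ht0rho).
  destruct (Topt_scaled_ge_terms m Hm) as (H1 & H2 & H3 & H4 & H5 & H6 & H7).
  destruct (opt_reciprocals_le_Topt m im rho) as ((Hkp & Hkrho & Hkt) & HWp & HWt); try assumption.
  set (p0 := p_scaled im) in *. set (t0 := tau_scaled rho) in *. set (T := Topt_scaled m) in *.
  assert (HTWm : Rmax (w + 1) m <= T) by (apply Rmax_lub; assumption).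
  apply T_scaled_lub; [lra| | | | | | | | | |].
  - replace (k / (a * p0)) with (k * (1 / p0) / a) by (field; lra). exact Hkp.
  - replace (k / (a * t0)) with (k * (1 / t0) / a) by (field; lra). exact Hkt.
  - apply Rle_trans with (k * (w + 1) / (a * c)); [|exact H2].
    apply Rdiv_le_cross; [positivity|positivity|].
    replace (k * (w + 1) * sqrt (w * t0) * (a * c))
      with (k * (w + 1) * a * (sqrt (w * t0) * c)) by ring.
    replace (k * (w + 1) * (a * h)) with (k * (w + 1) * a * h) by ring.
    apply Rmult_le_compat_l; [positivity|]. apply sqrt_w_tau_le; assumption.
  - replace (k * sW * sqrt (w * t0) / (a * sqrt p0 * h))
      with (k * (sW * sqrt (w * t0) / (sqrt p0 * h)) / a)
      by (assert (0 < sqrt p0) by positivity; field; lra).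
    apply Rle_trans with (k * (rho / c) / a); [|exact Hkrho].
    unfold Rdiv at 1 4. apply Rmult_le_compat_r; [positivity|]. apply Rmult_le_compat_l; [lra|].
    apply mixed_term_le; assumption.
  - apply (omega_p_term_le p0 m); assumption.
  - apply Rle_trans with (k * w * Rmax (w + 1) m / q); [|exact H4].
    replace (k * w / (q * p0)) with (k * w * (1 / p0) / q) by (field; lra).
    unfold Rdiv at 1 3. apply Rmult_le_compat_r; [positivity|].
    apply Rmult_le_compat_l; [positivity|exact HWp].
  - exact H5.
  - lra.
  - exact H6.
  - lra.
Qed.

End Scaled.


Lemma Rpower_cube x y : 0 < x -> Rpower x y ^ 3 = Rpower x (y * 3).
Proof.
  intros Hx. rewrite <- Rpower_pow by apply Rpower_pos. rewrite Rpower_mult. f_equal. simpl. ring.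
Qed.

Lemma cbrt_cube x : 0 < x -> cbrt x ^ 3 = x.
Proof.
  intros Hx. unfold cbrt. rewrite Rpower_cube by exact Hx.
  replace (1 / 3 * 3) with 1 by field. apply Rpower_1, Hx.
Qed.

Lemma Rpower_2_3_cube x : 0 < x -> Rpower x (2 / 3) ^ 3 = x ^ 2.
Proof.
  intros Hx. rewrite Rpower_cube by exact Hx.
  replace (2 / 3 * 3) with (INR 2) by (simpl; field). apply Rpower_pow, Hx.
Qed.

Lemma Rpower_3_2 x : 0 < x -> Rpower x (3 / 2) = x * sqrt x.
Proof.
  intros Hx. replace (3 / 2) with (1 + / 2) by field.
  rewrite Rpower_plus, Rpower_1, Rpower_sqrt by exact Hx. reflexivity.
Qed.

Lemma pow3_inj x y : 0 <= x -> 0 <= y -> x ^ 3 = y ^ 3 -> x = y.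
Proof. intros Hx Hy E. apply Rle_antisym; apply pow3_le_reg; lra. Qed.

Lemma sqrt_mul_rescale L Lmax nn : 0 < L -> 0 < Lmax -> 0 < nn ->
  sqrt (L * Lmax) = L * sqrt nn / sqrt (L * nn / Lmax).
Proof.
  intros HL HLmax Hn. assert (Hq : 0 < sqrt (L * nn / Lmax)) by positivity.
  apply sqrt_lem_1; [positivity|positivity|].
  replace (L * sqrt nn / sqrt (L * nn / Lmax) * (L * sqrt nn / sqrt (L * nn / Lmax)))
    with (L ^ 2 * sqrt nn ^ 2 / sqrt (L * nn / Lmax) ^ 2) by (field; lra).
  rewrite !pow2_sqrt by positivity. field. lra.
Qed.

Lemma cbrt_mul_rescale L Lmax nn : 0 < L -> 0 < Lmax -> 0 < nn ->
  Rpower L (2 / 3) * cbrt Lmax = L * cbrt nn / cbrt (L * nn / Lmax).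
Proof.
  intros HL HLmax Hn. pose proof (Rpower_pos (L * nn / Lmax) (1 / 3)) as Hq.
  apply pow3_inj; [left; apply Rmult_lt_0_compat; apply Rpower_pos|left; apply Rdiv_lt_0_compat;
    [apply Rmult_lt_0_compat; [lra|apply Rpower_pos]|exact Hq]|].
  rewrite Rpow_mult_distr, Rpower_2_3_cube, cbrt_cube by exact HL || exact HLmax.
  replace ((L * cbrt nn / cbrt (L * nn / Lmax)) ^ 3)
    with (L ^ 3 * cbrt nn ^ 3 / cbrt (L * nn / Lmax) ^ 3) by (unfold cbrt in *; field; lra).
  rewrite !cbrt_cube by positivity. field. lra.
Qed.

Section Problem.

Variables (n d : nat) (r w a Kw Ka mu L Lmax : R).
Hypotheses (Hn : (1 <= n)%nat) (Hr : 0 <= r <= 1) (Hw : 0 <= w) (Ha : 0 < a <= 1)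
  (HKw : 0 < Kw) (HKa : 0 < Ka) (Hmu : 0 < mu) (HmuL : mu <= L) (HLLmax : L <= Lmax)
  (HLmaxn : Lmax <= INR n * L).

Local Notation q := (L * INR n / Lmax).
Local Notation p0 := (p_opt n d r Kw Ka L Lmax w a).
Local Notation t0 := (tau_opt n d r Kw Ka L Lmax w a).
Local Notation Topt := (T_optimistic n d r Kw Ka L Lmax mu w a).

Lemma Kr_pos : 0 < Kr r Kw Ka.
Proof. unfold Kr. nra. Qed.

Lemma mur_nonneg : 0 <= mur d r Kw Ka.
Proof. pose proof Kr_pos. unfold mur. positivity. Qed.

Lemma INR_n_ge_1 : 1 <= INR n.
Proof. apply (le_INR 1), Hn. Qed.

Lemma scaled_parameters_spec :
  0 < L / mu /\ 1 <= q /\ 0 < sqrt q /\ sqrt q * sqrt q = q /\ 0 < cbrt q /\ cbrt q ^ 3 = q /\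
  0 < a <= 1 /\ 0 < sqrt a /\ sqrt a * sqrt a = a /\
  0 <= w /\ 0 < sqrt (w + 1) /\ sqrt (w + 1) * sqrt (w + 1) = w + 1.
Proof.
  assert (Hq : 1 <= q).
  { apply Rle_trans with (Lmax / Lmax); [right; field; lra|]. apply Rdiv_le_cross; nra. }
  repeat split; try lra; try positivity; try (apply sqrt_sqrt; lra).
  apply cbrt_cube. lra.
Qed.

Lemma Tfun_eq_T_scaled p t : 0 < p -> 0 < t ->
  Tfun n L Lmax mu w a p t = T_scaled (L / mu) q (sqrt q) a w (sqrt (w + 1)) p t.
Proof.
  intros Hp Ht. pose proof INR_n_ge_1.
  assert (0 < sqrt (INR n)) by positivity.
  assert (0 < sqrt q) by positivity.
  assert (0 < sqrt p) by positivity.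
  unfold Tfun, T_scaled. cbv zeta. f_equal. rewrite (sqrt_mul_rescale L Lmax (INR n)) by lra.
  repeat apply (f_equal2 (@cons R)); try reflexivity; f_equal; field; lra.
Qed.

Lemma T_optimistic_eq_Topt_scaled :
  Topt = Topt_scaled (L / mu) q (sqrt q) (cbrt q) a (sqrt a) w (sqrt (w + 1)) (mur d r Kw Ka).
Proof.
  pose proof INR_n_ge_1.
  assert (0 < sqrt (INR n)) by positivity.
  assert (0 < sqrt q) by positivity.
  assert (0 < sqrt a) by positivity.
  pose proof (Rpower_pos q (1 / 3)). pose proof (Rpower_pos (INR n) (1 / 3)).
  unfold T_optimistic, Topt_scaled. cbv zeta. f_equal.
  rewrite <- sqrt_mult_alt, (sqrt_mul_rescale L Lmax (INR n)), sqrt_mult_alt, Rpower_3_2 by lra.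
  rewrite (cbrt_mul_rescale L Lmax (INR n)) by lra. unfold cbrt.
  repeat apply (f_equal2 (@cons R)); try reflexivity; f_equal; field; lra.
Qed.

Lemma p_opt_eq_p_scaled :
  p0 = p_scaled (sqrt q) (cbrt q) (sqrt a) w (sqrt (w + 1)) (inv_mur d r Kw Ka).
Proof. unfold p_opt, p_scaled. cbv zeta. rewrite Rpower_3_2 by lra. reflexivity. Qed.

Lemma tau_opt_eq_tau_scaled : t0 = tau_scaled (cbrt q) w (Rpower (w + 1) (2 / 3) / cbrt p0).
Proof.
  unfold tau_opt, tau_scaled. cbv zeta. do 3 f_equal.
  pose proof (Rpower_pos (w + 1) (2 / 3)). pose proof (Rpower_pos p0 (1 / 3)).
  unfold cbrt. field. lra.
Qed.

Lemma inv_mur_spec :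
  0 < inv_mur d r Kw Ka /\ inv_mur d r Kw Ka * mur d r Kw Ka <= 1 /\
  1 <= inv_mur d r Kw Ka * Rmax 1 (mur d r Kw Ka).
Proof.
  pose proof mur_nonneg as Hm. unfold inv_mur in *. set (m := mur d r Kw Ka) in *.
  destruct (Req_EM_T m 0) as [E|E].
  - rewrite E, Rmax_left by lra. lra.
  - assert (0 < m) by lra.
    replace (1 / m * m) with 1 by (field; lra).
    split; [positivity|split; [lra|]].
    apply Rle_trans with (1 / m * m); [right; field; lra|].
    apply Rmult_le_compat_l; [positivity|apply Rmax_r].
Qed.

Lemma p_opt_bounds : 0 < p0 <= 1.
Proof.
  destruct inv_mur_spec as (Him & _ & _).
  rewrite p_opt_eq_p_scaled. split; [|apply p_scaled_le].
  apply p_scaled_pos; [apply Rpower_pos|exact Hw|exact Him].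
Qed.

Lemma p_opt_mur_le_1 : p0 * mur d r Kw Ka <= 1.
Proof.
  destruct inv_mur_spec as (_ & Himm & _). pose proof mur_nonneg.
  apply Rle_trans with (inv_mur d r Kw Ka * mur d r Kw Ka); [|exact Himm].
  apply Rmult_le_compat_r; [assumption|]. rewrite p_opt_eq_p_scaled. apply p_scaled_le.
Qed.

Lemma tau_opt_bounds : 0 < t0 <= 1.
Proof.
  rewrite tau_opt_eq_tau_scaled. split.
  - apply tau_scaled_pos; [apply Rpower_pos|exact Hw|]. unfold cbrt. positivity.
  - apply tau_scaled_le, Rpower_pos.
Qed.

Lemma T_optimistic_le_Tfun p t : 0 < p <= 1 -> 0 < t <= 1 ->
  Topt <= 2 * (1 + p * mur d r Kw Ka) * Tfun n L Lmax mu w a p t.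
Proof.
  intros Hp Ht. rewrite T_optimistic_eq_Topt_scaled, Tfun_eq_T_scaled by lra.
  destruct scaled_parameters_spec
    as (Hk & Hq & Hh & Hhq & Hc & Hcq & _ & Hsa & Hsaa & _ & HsW & HsWw).
  apply Topt_scaled_le_T_scaled; try assumption. apply mur_nonneg.
Qed.

Lemma Tfun_opt_le_T_optimistic : Tfun n L Lmax mu w a p0 t0 <= Topt.
Proof.
  destruct inv_mur_spec as (Him & _ & Him1). pose proof mur_nonneg.
  pose proof p_opt_bounds. pose proof tau_opt_bounds.
  rewrite T_optimistic_eq_Topt_scaled, Tfun_eq_T_scaled by lra.
  rewrite tau_opt_eq_tau_scaled.
  set (rho := Rpower (w + 1) (2 / 3) / cbrt p0).
  assert (Erho : rho ^ 3 * p0 = (w + 1) ^ 2).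
  { unfold rho. pose proof (Rpower_pos p0 (1 / 3)).
    replace ((Rpower (w + 1) (2 / 3) / cbrt p0) ^ 3) with (Rpower (w + 1) (2 / 3) ^ 3 / cbrt p0 ^ 3)
      by (unfold cbrt; field; lra).
    rewrite Rpower_2_3_cube, cbrt_cube by lra. field. lra. }
  rewrite p_opt_eq_p_scaled in Erho |- *.
  destruct scaled_parameters_spec
    as (Hk & Hq & Hh & Hhq & Hc & Hcq & _ & Hsa & Hsaa & _ & HsW & HsWw).
  apply T_scaled_le_Topt_scaled; try assumption. unfold rho, cbrt. positivity.
Qed.

Lemma Mfun_eq p t :
  Mfun n d r Kw Ka L Lmax mu w a p t =
  Kr r Kw Ka * (1 + p * mur d r Kw Ka) * Tfun n L Lmax mu w a p t + INR d.
Proof. pose proof Kr_pos. unfold Mfun, mur. f_equal. f_equal. unfold Kr in *. field. lra. Qed.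

Lemma Mfun_opt_le : Mfun n d r Kw Ka L Lmax mu w a p0 t0 <= 2 * (Kr r Kw Ka * Topt) + INR d.
Proof.
  pose proof Kr_pos. pose proof mur_nonneg. pose proof p_opt_bounds. pose proof p_opt_mur_le_1.
  pose proof Tfun_opt_le_T_optimistic.
  assert (0 <= Tfun n L Lmax mu w a p0 t0) by apply Rmax_list_nonneg.
  rewrite Mfun_eq. apply Rplus_le_compat_r.
  replace (2 * (Kr r Kw Ka * Topt)) with (Kr r Kw Ka * (2 * Topt)) by ring.
  rewrite Rmult_assoc. apply Rmult_le_compat_l; nra.
Qed.

Lemma T_optimistic_le_Mfun p t : 0 < p <= 1 -> 0 < t <= 1 ->
  Kr r Kw Ka * Topt + INR d <= 2 * Mfun n d r Kw Ka L Lmax mu w a p t.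
Proof.
  intros Hp Ht. pose proof Kr_pos. pose proof (pos_INR d).
  assert (Kr r Kw Ka * Topt
          <= Kr r Kw Ka * (2 * (1 + p * mur d r Kw Ka) * Tfun n L Lmax mu w a p t))
    by (apply Rmult_le_compat_l; [lra|]; apply T_optimistic_le_Tfun; assumption).
  rewrite Mfun_eq. lra.
Qed.

Lemma T_optimistic_le_Tfun_opt : Topt <= 4 * Tfun n L Lmax mu w a p0 t0.
Proof.
  pose proof mur_nonneg. pose proof p_opt_bounds. pose proof p_opt_mur_le_1.
  assert (0 <= Tfun n L Lmax mu w a p0 t0) by apply Rmax_list_nonneg.
  apply Rle_trans with (2 * (1 + p0 * mur d r Kw Ka) * Tfun n L Lmax mu w a p0 t0); [|nra].
  apply T_optimistic_le_Tfun; [exact p_opt_bounds|exact tau_opt_bounds].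
Qed.

End Problem.

Theorem theorem3 :

  exists C : R, 0 < C /\
  forall (n d : nat) (r omega alpha Kw Ka mu L Lmax : R),
    (1 <= n)%nat -> (1 <= d)%nat ->
    0 <= r <= 1 -> 0 <= omega -> 0 < alpha <= 1 ->
    0 < Kw -> 0 < Ka ->
    0 < mu -> mu <= L -> L <= Lmax -> Lmax <= INR n * L ->
    let p0 := p_opt n d r Kw Ka L Lmax omega alpha in
    let t0 := tau_opt n d r Kw Ka L Lmax omega alpha in
    let T0 := Tfun n L Lmax mu omega alpha p0 t0 in
    let M0 := Mfun n d r Kw Ka L Lmax mu omega alpha p0 t0 in
    let Topt := T_optimistic n d r Kw Ka L Lmax mu omega alpha in
    (* (i) (p0,t0) is admissible and minimizes M up to a constant *)
    (0 < p0 <= 1 /\ 0 < t0 <= 1 /\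
     forall p tau, 0 < p <= 1 -> 0 < tau <= 1 ->
       M0 <= C * Mfun n d r Kw Ka L Lmax mu omega alpha p tau) /\
    (* (ii) T(p0,t0) is of the order of T^optimistic *)
    (Topt <= C * T0 /\ T0 <= C * Topt) /\
    (* (iii) M(p0,t0) is of the order of K^r T^optimistic + d *)
    (Kr r Kw Ka * Topt + INR d <= C * M0 /\
     M0 <= C * (Kr r Kw Ka * Topt + INR d)).
Proof.
  exists 4. split; [lra|].
  intros n d r w a Kw Ka mu L Lmax Hn Hd Hr Hw Ha HKw HKa Hmu HmuL HLLmax HLmaxn p0 t0 T0 M0 Topt.
  assert (Hp0 : 0 < p0 <= 1) by (apply p_opt_bounds; assumption).
  assert (Ht0 : 0 < t0 <= 1) by (apply tau_opt_bounds; assumption).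
  assert (HT0 : T0 <= Topt) by (apply Tfun_opt_le_T_optimistic; assumption).
  assert (HTopt : Topt <= 4 * T0) by (apply T_optimistic_le_Tfun_opt; assumption).
  assert (HM0 : M0 <= 2 * (Kr r Kw Ka * Topt) + INR d) by (apply Mfun_opt_le; assumption).
  assert (HM : forall p t, 0 < p <= 1 -> 0 < t <= 1 ->
      Kr r Kw Ka * Topt + INR d <= 2 * Mfun n d r Kw Ka L Lmax mu w a p t)
    by (intros; apply T_optimistic_le_Mfun; assumption).
  assert (HKT : 0 <= Kr r Kw Ka * Topt)
    by (apply Rmult_le_pos; [left; apply Kr_pos; assumption|apply Rmax_list_nonneg]).
  assert (HM0' : Kr r Kw Ka * Topt + INR d <= 2 * M0) by (apply HM; assumption).
  pose proof (pos_INR d).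
  split; [split; [exact Hp0|split; [exact Ht0|]]|split; split; lra].
  intros p t Hp Ht. pose proof (HM p t Hp Ht). lra.
Qed.
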